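(* Let $A\in\mathbb{R}^{n\times n}$ and $b\in\mathbb{R}^n$. Suppose that $A$ satisfies either (a) $A-I$ is an $M$-matrix, or (b) $\mathcal{N}(A^\top-I)=\mathrm{span}(v)$ for some vector $v>0$, and $A-I+D$ is an $M$-matrix for every diagonal matrix $D=\mathrm{diag}(d)$ with $d\ge 0$ and $d\neq 0$. If $A$ satisfies (b), assume in addition that $v^\top b<0$. Then the absolute value equation $Ax-|x|-b=0$ has a solution $x\in\mathbb{R}^n$, and this solution is unique.
   Context: For $x\in\mathbb{R}^n$, $|x|=(|x_1|,\dots,|x_n|)^\top$. A matrix is a $Z$-matrix if all its off-diagonal entries are $\le 0$; a $Z$-matrix $A$ is an $M$-matrix if $A$ is nonsingular and $A^{-1}\ge 0$ (entrywise). Vector inequalities are entrywise; $v>0$ means all entries of $v$ are strictly positive. $\mathcal{N}(X)$ denotes the null space of $X$. *)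

From mathcomp Require Import all_boot all_order all_algebra.
From mathcomp Require Import reals.
Set Implicit Arguments. Unset Strict Implicit. Unset Printing Implicit Defensive.
Import Order.TTheory GRing.Theory Num.Theory.
Local Open Scope ring_scope.

Definition absv (R : realType) (n : nat) (x : 'cV[R]_n) : 'cV[R]_n :=
  \col_i `|x i 0|.

Definition Zmatrix (R : realType) (n : nat) (A : 'M[R]_n) : Prop :=
  forall i j : 'I_n, i != j -> A i j <= 0.

Definition Mmatrix (R : realType) (n : nat) (A : 'M[R]_n) : Prop :=
  [/\ Zmatrix A, A \in unitmx & forall i j : 'I_n, 0 <= invmx A i j].

Definition nullspace_is_span (R : realType) (n : nat) (X : 'M[R]_n)
  (v : 'cV[R]_n) : Prop :=
  forall w : 'cV[R]_n, X *m w = 0 <-> exists c : R, w = c *: v.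

Definition diagv (R : realType) (n : nat) (d : 'cV[R]_n) : 'M[R]_n :=
  diag_mx d^T.

Definition posv (R : realType) (n : nat) (v : 'cV[R]_n) : Prop :=
  forall i, 0 < v i 0.

Definition nonnegv (R : realType) (n : nat) (v : 'cV[R]_n) : Prop :=
  forall i, 0 <= v i 0.

Definition condition_a (R : realType) (n : nat) (A : 'M[R]_n) : Prop :=
  Mmatrix (A - 1%:M).

Definition condition_b (R : realType) (n : nat) (A : 'M[R]_n)
  (v : 'cV[R]_n) : Prop :=
  [/\ nullspace_is_span (A^T - 1%:M) v, posv v &
      forall d : 'cV[R]_n, nonnegv d -> d != 0 ->
        Mmatrix (A - 1%:M + diagv d)].

From mathcomp Require Import all_boot all_order all_algebra.
From mathcomp Require Import reals.
From mathcomp Require Import lra.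
Import Order.TTheory GRing.Theory Num.Theory.
Local Open Scope ring_scope.
Set Implicit Arguments. Unset Strict Implicit.

(* With [B = A - 1] and [g t = t - |t|] (that is [2 t] for [t < 0] and [0]
   otherwise), the equation reads [B x + g x = b].  Both hypotheses make the
   matrices [B + diag d], [d >= 0] ([d != 0] under (b)), monotone:
   [(B + diag d) w >= 0] implies [w >= 0].
   Existence: starting from [s = all indices], solve [(B + 2 diag 1_s) y = b]
   and replace [s] by the set where [y < 0]; the iterates [y] increase, so the
   sets decrease and the iteration stops at a set [s] equal to the negative set
   of its own [y], which then solves the equation.
   Uniqueness: two solutions satisfy [(B + diag e) (x - y) = 0] for the secant
   slopes [e] of [g], which lie in [[0, 2]].
   Under (b), [v^T B = 0] and [v^T b < 0] force every iterate and every
   solution to have a negative entry, so all diagonals used are nonzero. *)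

Section MonotoneMatrices.
Context {R : realType} {n : nat}.
Implicit Types (J : 'M[R]_n) (u v w : 'cV[R]_n).

Definition mx_monotone J := forall w, nonnegv (J *m w) -> nonnegv w.

Lemma mx_monotone_inj J w : mx_monotone J -> J *m w = 0 -> w = 0.
Proof.
move=> monoJ Jw0; have nonneg0 : nonnegv (0 : 'cV[R]_n) by move=> i; rewrite mxE.
apply/matrixP => i j; rewrite (ord1 j) [RHS]mxE.
have := monoJ w; rewrite Jw0 => /(_ nonneg0 i).
have := monoJ (- w); rewrite mulmxN Jw0 oppr0 => /(_ nonneg0 i).
rewrite mxE; lra.
Qed.

Lemma mx_monotone_unit J : mx_monotone J -> J \in unitmx.
Proof.
move=> monoJ; rewrite -unitmx_tr -row_free_unit; apply: inj_row_free => w wJ0.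
apply: trmx_inj; rewrite trmx0; apply: mx_monotone_inj monoJ _.
by rewrite -[J]trmxK -trmx_mul wJ0 trmx0.
Qed.

Lemma Mmatrix_monotone J : Mmatrix J -> mx_monotone J.
Proof.
case=> _ Junit inv_ge0 w Jw_ge0 i.
by rewrite -(mulKmx Junit w) mxE; apply: sumr_ge0 => j _; apply: mulr_ge0.
Qed.

Lemma Zmatrix_mulmx_le J v w i :
  Zmatrix J -> (forall j, v j 0 <= w j 0) -> v i 0 = w i 0 ->
  (J *m w) i 0 <= (J *m v) i 0.
Proof.
move=> ZJ le_vw eq_vw_i; rewrite !mxE; apply: ler_sum => j _.
case: (eqVneq i j) => [<-|ij]; first by rewrite eq_vw_i.
by apply: ler_wnM2l; [apply: ZJ | apply: le_vw].
Qed.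

Lemma Zmatrix_posv J u : Zmatrix J -> nonnegv u -> posv (J *m u) -> posv u.
Proof.
move=> ZJ u_ge0 Ju_gt0 i; rewrite lt_def u_ge0 andbT; apply/eqP => ui0.
have le0u j : (0 : 'cV[R]_n) j 0 <= u j 0 by rewrite mxE.
have eq0u : (0 : 'cV[R]_n) i 0 = u i 0 by rewrite mxE ui0.
have /(lt_le_trans (Ju_gt0 i)) := Zmatrix_mulmx_le ZJ le0u eq0u.
by rewrite mulmx0 mxE ltxx.
Qed.

(* The minimal ratio [w j / u j] is attained at some [i]; if it were negative,
   the Z-sign pattern would force [(J w) i < 0]. *)
Lemma Zmatrix_monotone J u :
  Zmatrix J -> nonnegv u -> posv (J *m u) -> mx_monotone J.
Proof.
move=> ZJ u_ge0 Ju_gt0; have u_gt0 := Zmatrix_posv ZJ u_ge0 Ju_gt0.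
move=> w Jw_ge0 i0; pose ratio j := w j 0 / u j 0.
have [i _ ratio_min] := @arg_minP _ _ _ i0 xpredT ratio isT.
have le_scaled j : (ratio i *: u) j 0 <= w j 0.
  by rewrite mxE -ler_pdivlMr ?u_gt0 //; apply: ratio_min.
suff ratio_ge0 : 0 <= ratio i.
  by apply: le_trans (le_scaled i0); rewrite mxE; apply: mulr_ge0 (u_ge0 i0).
rewrite leNgt; apply/negP => ratio_lt0.
have eq_scaled : (ratio i *: u) i 0 = w i 0.
  by rewrite mxE divfK // gt_eqF ?u_gt0.
have := Zmatrix_mulmx_le ZJ le_scaled eq_scaled.
rewrite -scalemxAr [X in _ <= X]mxE; have := Jw_ge0 i; have := Ju_gt0 i.
have : ratio i * (J *m u) i 0 < 0 by rewrite pmulr_llt0.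
lra.
Qed.

End MonotoneMatrices.

Section SubAbs.
Context {R : realType}.
Implicit Types s t : R.

Definition sub_abs t := t - `|t|.

Lemma ger0_sub_abs t : 0 <= t -> sub_abs t = 0.
Proof. by move=> t_ge0; rewrite /sub_abs ger0_norm ?subrr. Qed.

Lemma ltr0_sub_abs t : t < 0 -> sub_abs t = t *+ 2.
Proof. by move=> t_lt0; rewrite /sub_abs ltr0_norm ?opprK. Qed.

Lemma le_sub_abs s t : s <= t -> sub_abs s <= sub_abs t.
Proof.
rewrite /sub_abs => le_st; case: (lerP 0 s) => [s_ge0|s_lt0].
  by rewrite !ger0_norm ?(le_trans s_ge0) // !subrr.
by rewrite (ltr0_norm s_lt0); case: (lerP 0 t) => [/ger0_norm|/ltr0_norm] ->; lra.
Qed.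

Lemma sub_abs_inj_ltr0 s t : s < 0 -> sub_abs s = sub_abs t -> s = t.
Proof.
rewrite /sub_abs => s_lt0; rewrite (ltr0_norm s_lt0).
by case: (lerP 0 t) => [/ger0_norm|/ltr0_norm] ->; lra.
Qed.

End SubAbs.

Section AbsoluteValueEquation.
Context {R : realType} {n : nat}.
Implicit Types (B : 'M[R]_n) (d u w x y : 'cV[R]_n) (s : {set 'I_n}).

Lemma mulmx_diagvE d w i : (diagv d *m w) i 0 = d i 0 * w i 0.
Proof. by rewrite mul_diag_mx !mxE. Qed.

Lemma diagvB d u : diagv (d - u) = diagv d - diagv u.
Proof. by rewrite /diagv !linearB. Qed.

Lemma Zmatrix_add_diagv B d : Zmatrix B -> Zmatrix (B + diagv d).
Proof. by move=> ZB i j ij; rewrite !mxE (negbTE ij) mulr0n addr0; apply: ZB. Qed.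

Lemma sub_absvE x i : (x - absv x) i 0 = sub_abs (x i 0).
Proof. by rewrite !mxE. Qed.

Definition negs x : {set 'I_n} := [set i | x i 0 < 0].

(* [t - |t|] has slope 2 on the negative half-line and 0 on the other one *)
Definition slopes s : 'cV[R]_n := \col_i (if i \in s then 2 else 0).

Lemma slopes_ge0 s : nonnegv (slopes s).
Proof. by move=> i; rewrite mxE; case: (i \in s). Qed.

Lemma slopes_neq0 s : s != set0 -> slopes s != 0.
Proof.
case/set0Pn => i i_s; apply/eqP => /matrixP/(_ i 0)/eqP.
by rewrite !mxE i_s pnatr_eq0.
Qed.

Lemma diagv_slopes_negs x : diagv (slopes (negs x)) *m x = x - absv x.
Proof.
apply/matrixP => i j; rewrite (ord1 j) mulmx_diagvE sub_absvE mxE inE.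
case: ltP => [/ltr0_sub_abs|/ger0_sub_abs] ->; last by rewrite mul0r.
by rewrite mulr_natl.
Qed.

(* The value at equal coordinates is irrelevant; 2 keeps it positive. *)
Definition secant x y : 'cV[R]_n := \col_j
  if x j 0 == y j 0 then 2
  else (sub_abs (x j 0) - sub_abs (y j 0)) / (x j 0 - y j 0).

Lemma secant_ge0 x y : nonnegv (secant x y).
Proof.
move=> j; rewrite mxE; case: (ltrgtP (x j 0) (y j 0)) => [xy|xy|_] //.
  by apply: mulr_le0; rewrite ?invr_le0 subr_le0 ?le_sub_abs ?ltW.
by apply: divr_ge0; rewrite subr_ge0 ?le_sub_abs ?ltW.
Qed.

Lemma secant_gt0 x y j : x j 0 < 0 -> 0 < secant x y j 0.
Proof.
move=> x_lt0; have := secant_ge0 x y j; rewrite lt_def => ->; rewrite andbT mxE.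
case: (eqVneq (x j 0) (y j 0)) => [_|neq_xy]; first by rewrite pnatr_eq0.
rewrite mulf_eq0 invr_eq0 !subr_eq0 (negbTE neq_xy) orbF.
by apply: contra neq_xy => /eqP/(sub_abs_inj_ltr0 x_lt0) ->.
Qed.

Lemma diagv_secant x y :
  diagv (secant x y) *m (x - y) = (x - absv x) - (y - absv y).
Proof.
apply/matrixP => j k; rewrite (ord1 k) mulmx_diagvE !mxE.
case: eqVneq => [->|neq_xy]; first by rewrite !subrr mulr0.
by rewrite divfK ?subr_eq0.
Qed.

End AbsoluteValueEquation.

Section ActiveSetIteration.
Context {R : realType} {n : nat}.
Variables (B : 'M[R]_n) (b : 'cV[R]_n).

Definition ave_solution x := B *m x + (x - absv x) = b.

Lemma ave_solution_negs x :
  ave_solution x <-> (B + diagv (slopes (negs x))) *m x = b.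
Proof. by rewrite /ave_solution mulmxDl diagv_slopes_negs. Qed.

Lemma ave_solution_unique x y :
  ave_solution x -> ave_solution y ->
  mx_monotone (B + diagv (secant x y)) -> x = y.
Proof.
move=> sol_x sol_y mono; apply/eqP; rewrite -subr_eq0; apply/eqP.
apply: mx_monotone_inj mono _.
by rewrite mulmxDl diagv_secant mulmxBr addrACA -opprD sol_x sol_y subrr.
Qed.

Variable P : {set 'I_n} -> Prop.
Local Notation J s := (B + diagv (slopes s)).
Local Notation y_ s := (invmx (J s) *m b).
Hypothesis P_monotone : forall s, P s -> mx_monotone (J s).
Hypothesis P_setT : P setT.
Hypothesis P_negs : forall s y, P s -> J s *m y = b -> P (negs y).

Lemma mulmx_active_solution s : P s -> J s *m y_ s = b.
Proof. by move=> /P_monotone/mx_monotone_unit J_unit; rewrite mulKVmx. Qed.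

(* [J s' (y' - y) = (diagv (slopes s) - diagv (slopes s')) y >= 0] because [y]
   is negative exactly on [s']; monotonicity of [J s'] then gives [y <= y']. *)
Lemma negs_active_solution_subset s :
  P s -> negs (y_ (negs (y_ s))) \subset negs (y_ s).
Proof.
move=> Ps; have Jy := mulmx_active_solution Ps.
set y := y_ s in Jy *; set s' := negs y; set y' := y_ s'.
have Ps' : P s' := P_negs Ps Jy.
have Jy' : J s' *m y' = b := mulmx_active_solution Ps'.
clearbody y' y.
have le_yy' : nonnegv (y' - y).
  apply: (P_monotone Ps') => i.
  rewrite mulmxBr Jy' -{1}Jy -mulmxBl opprD addrACA subrr add0r -diagvB.
  rewrite mulmx_diagvE !mxE /s' inE.
  by case: (i \in s); case: ltP => y_i; lra.
apply/subsetP => i; rewrite !inE => y'_lt0.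
by have := le_yy' i; rewrite !mxE; lra.
Qed.

Lemma exists_ave_solution : exists x, ave_solution x.
Proof.
suff: forall k (s : {set 'I_n}), (#|s| < k)%N -> P s -> negs (y_ s) \subset s ->
    exists x, ave_solution x.
  by move/(_ #|[set: 'I_n]|.+1 setT); apply.
elim=> [//|k IH] s card_s Ps negs_sub.
have [negs_eq|negs_neq] := eqVneq (negs (y_ s)) s.
  exists (y_ s); apply/ave_solution_negs.
  by rewrite negs_eq; apply: mulmx_active_solution.
have negs_proper : negs (y_ s) \proper s by rewrite properEneq negs_neq.
apply: (IH (negs (y_ s))); last exact: negs_active_solution_subset.
- exact: leq_trans (proper_card negs_proper) card_s.
- exact: P_negs Ps (mulmx_active_solution Ps).
Qed.

Lemma ave_exists_unique :
  (forall x y, ave_solution x -> ave_solution y ->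
     mx_monotone (B + diagv (secant x y))) ->
  exists! x, ave_solution x.
Proof.
move=> secant_monotone; have [x sol_x] := exists_ave_solution.
exists x; split=> // y sol_y.
exact: ave_solution_unique sol_x sol_y (secant_monotone _ _ sol_x sol_y).
Qed.

End ActiveSetIteration.

Section ExistenceUniqueness.
Context {R : realType} {n : nat}.
Variables (B : 'M[R]_n) (b : 'cV[R]_n).

Lemma ave_solutionE (A : 'M[R]_n) x :
  A *m x - absv x - b = 0 <-> ave_solution (A - 1%:M) b x.
Proof.
rewrite /ave_solution mulmxBl mul1mx addrA subrK.
by split=> [/eqP|<-]; rewrite ?subr_eq0 ?subrr => // /eqP.
Qed.

(* [u := B^-1 1 >= 0] satisfies [(B + diag d) u = 1 + d u > 0]. *)
Lemma Mmatrix_add_diagv_monotone d :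
  Mmatrix B -> nonnegv d -> mx_monotone (B + diagv d).
Proof.
case=> ZB B_unit inv_ge0 d_ge0; pose u : 'cV[R]_n := invmx B *m const_mx 1.
have u_ge0 : nonnegv u.
  by move=> i; rewrite mxE; apply: sumr_ge0 => j _; rewrite mxE mulr1.
have Bu : B *m u = const_mx 1 by rewrite mulKVmx.
clearbody u; apply: (Zmatrix_monotone (Zmatrix_add_diagv d ZB) u_ge0) => i.
rewrite mulmxDl Bu mxE mulmx_diagvE mxE.
by have := mulr_ge0 (d_ge0 i) (u_ge0 i); lra.
Qed.

Lemma Mmatrix_ave_exists_unique :
  Mmatrix B -> exists! x, ave_solution B b x.
Proof.
move=> B_M; apply: (@ave_exists_unique _ _ B b (fun _ => True)) => // [s _|x y _ _].
  exact: (Mmatrix_add_diagv_monotone B_M (slopes_ge0 s)).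
exact: (Mmatrix_add_diagv_monotone B_M (secant_ge0 x y)).
Qed.

Variable v : 'cV[R]_n.
Hypotheses (v_gt0 : posv v) (vB0 : v^T *m B = 0) (vb_lt0 : (v^T *m b) 0 0 < 0).

(* Pairing with [v] kills [B], so [v^T b] would be [>= 0] for [y >= 0]. *)
Lemma negs_neq0 d y : nonnegv d -> (B + diagv d) *m y = b -> negs y != set0.
Proof.
move=> d_ge0 Jy; apply: contraTneq vb_lt0 => negs0.
have y_ge0 i : 0 <= y i 0.
  by rewrite leNgt; have := in_set0 i; rewrite -negs0 inE => ->.
rewrite -leNgt -Jy mulmxDl mulmxDr mulmxA vB0 mul0mx add0r mxE.
apply: sumr_ge0 => i _; rewrite mxE mulmx_diagvE.
exact: mulr_ge0 (ltW (v_gt0 i)) (mulr_ge0 (d_ge0 i) (y_ge0 i)).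
Qed.

Lemma left_null_ave_exists_unique :
  (forall d, nonnegv d -> d != 0 -> Mmatrix (B + diagv d)) ->
  exists! x, ave_solution B b x.
Proof.
move=> BD_M; apply: (@ave_exists_unique _ _ B b (fun s => s != set0)).
- move=> s s_neq0; apply/Mmatrix_monotone/BD_M; first exact: slopes_ge0.
  exact: slopes_neq0.
- apply: contraTneq vb_lt0 => T0; rewrite mxE big1 ?ltxx // => i _.
  by have := in_setT i; rewrite T0 inE.
- by move=> s y _; apply: negs_neq0 (slopes_ge0 s).
move=> x y /ave_solution_negs sol_x _.
apply/Mmatrix_monotone/BD_M; first exact: secant_ge0.
have /set0Pn[j] := negs_neq0 (slopes_ge0 _) sol_x; rewrite inE => x_lt0.
by apply: contraTneq (secant_gt0 y x_lt0) => ->; rewrite mxE ltxx.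
Qed.

End ExistenceUniqueness.

Unset Implicit Arguments. Set Strict Implicit.

Theorem theorem3p2 (R : realType) (n : nat) (A : 'M[R]_n) (b : 'cV[R]_n) :
  (condition_a A \/
   exists v : 'cV[R]_n, condition_b A v /\ (v^T *m b) 0 0 < 0) ->
  exists! x : 'cV[R]_n, A *m x - absv x - b = 0.
Proof.
move=> cond; suff [x [sol_x uniq_x]] : exists! x, ave_solution (A - 1%:M) b x.
  by exists x; split=> [|y /ave_solutionE /uniq_x]; first exact/ave_solutionE.
case: cond => [A1_M|[v [[null_v v_gt0 AD_M] vb_lt0]]].
  exact: Mmatrix_ave_exists_unique.
have vA0 : v^T *m (A - 1%:M) = 0.
  apply: trmx_inj; rewrite trmx_mul trmxK linearB /= trmx1 trmx0.
  by apply/null_v; exists 1; rewrite scale1r.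
exact: left_null_ave_exists_unique v_gt0 vA0 vb_lt0 AD_M.
Qed.
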